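(* Let $(X_i,Y_i)_{i=1}^n$ be a V-geometrically ergodic Markov chain on $\mathcal{X}\times\mathcal{Y}$ with stationary distribution $\pi$ and constants $\gamma,\rho,B$, and let $\tilde S=(X_i,\tilde Y_i)_{i=1}^n$ with $\tilde Y_i=Y_i+\xi_i$ and $-\Xi/2\le\xi_i\le\Xi/2$ for all $i$. Let $\alpha\in(0,1)$ and let $P_n$ be the normalized weights of the BWA algorithm run on the noisy data $\tilde S$. For all $\epsilon\in(0,3M]$ and $\delta\in(0,1)$, if \[ n_e\ge\frac{288M^2}{\epsilon^2}\left(\ln\frac2\delta+\ln(1+\gamma Be^{-2})+\ln\mathcal{N}\!\left(\mathcal{H},\frac{\epsilon}{24L}\right)\right), \] then \[ \mathbb{P}\left(\sup_{h\in\mathcal{H}\setminus\mathcal{H}_{\gamma^*+\epsilon+\Xi}}P_n(h)\le\frac{\alpha^{n\epsilon/6}}{\mathcal{V}_{\epsilon/2}}\right)\ge1-\delta. \]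
   Context: V-geometric ergodicity: Let $\mathcal{Z}$ be a compact subset of $\mathbb{R}^N$ with a $\sigma$-algebra $\mathcal{F}$. For probability measures $P_1,P_2$ on $(\mathcal{Z},\mathcal{F})$, $\|P_1-P_2\|_{TV}=2\sup_{A\in\mathcal{F}}|P_1(A)-P_2(A)|$. A Markov chain $(Z_i)_{i\ge1}$ on $\mathcal{Z}$ with $n$-step transition probabilities $P^n(\cdot\mid z)$ and stationary distribution $\pi$ is V-geometrically ergodic with respect to a measurable $V:\mathcal{Z}\to[1,\infty)$ if there exist $\gamma<\infty$, $\rho<1$, $B<\infty$ such that for all $z\in\mathcal{Z}$ and $n\ge1$, $\|P^n(\cdot\mid z)-\pi\|_{TV}\le\gamma\rho^nV(z)$, and $\int_{\mathcal{Z}}V\,d\pi<B$. Setting: $\mathcal{X}\subset\mathbb{R}^d$ and $\mathcal{Y}\subset\mathbb{R}$ are compact, $\mathcal{Z}=\mathcal{X}\times\mathcal{Y}$. $\mathcal{H}$ is a set of functions $h:\mathcal{X}\to\mathcal{Y}$ contained in a ball of the Hölder space $C^q(\mathcal{X})$ ($q>0$), with norm $\|h\|_{C^q}=\|h\|_\infty+\sup_{x_1\ne x_2}\frac{|h(x_1)-h(x_2)|}{\|x_1-x_2\|^q}$. Constants: $M=\sup_{h\in\mathcal{H}}\max_{(x,y)\in\mathcal{Z}}|h(x)-y|$ and $L=\sup_{h_1\ne h_2\in\mathcal{H}}\max_{(x,y)\in\mathcal{Z}}\frac{||h_1(x)-y|-|h_2(x)-y||}{\|h_1-h_2\|_\infty}$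 (both assumed positive and finite). The covering number $\mathcal{N}(\mathcal{H},\epsilon)$ is the smallest number of balls of radius $\epsilon$ (in $\|\cdot\|_{C^q}$) covering $\mathcal{H}$. Noisy empirical loss $l_{\tilde S}(h)=\frac1n\sum_{i=1}^n|h(X_i)-\tilde Y_i|$; expected loss $l(h)=\mathbb{E}_{(X,Y)\sim\pi}|h(X)-Y|$ with respect to the stationary distribution of the noiseless chain. The noise $\xi_i$ are arbitrary random variables (no distributional assumption) bounded as stated, with $\Xi\ge0$ a constant. The effective sample size is $n_e=\left\lfloor \frac{n}{\lceil (8n/\ln(1/\rho))^{1/2}\rceil}\right\rfloor$. Prior and optimal loss: $\mu$ is a probability measure on $\mathcal{H}$; the sets $\mathcal{H}_t=\{h\in\mathcal{H}: l(h)\le t\}$ are $\mu$-measurable for all $t\in\mathbb{R}$. $\gamma^*=\inf\{t:\mu(\mathcal{H}_t)>0\}$, and for $\epsilon>0$, $\mathcal{V}_\epsilon=\mu(\mathcal{H}_{\gamma^*+\epsilon})$ (which is $>0$). BWA algorithm on noisy data, parameter $\alpha\in(0,1)$: $w_n(h)=\alpha^{n\,l_{\tilde S}(h)}$, $P_n(h)=w_n(h)/\int_{\mathcal{H}}w_n\,d\mu$, $\bar h_n(x)=\int_{\mathcal{H}}P_n(h)h(x)\,d\mu(h)$. Known fact (Zou et al. 2012, uniform convergence): for the noiseless data $S=(X_i,Y_i)_{i=1}^n$ with $l_S(h)=\frac1n\sum_{i=1}^n|h(X_i)-Y_i|$, for all $\epsilon\in(0,3M]$, $\delta\in(0,1)$,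 if $n_e\ge\frac{8M^2}{\epsilon^2}\big(\ln\frac2\delta+\ln(1+\gamma Be^{-2})+\ln\mathcal{N}(\mathcal{H},\frac{\epsilon}{4L})\big)$, then $\mathbb{P}(\forall h\in\mathcal{H},\ |l_S(h)-l(h)|<\epsilon)\ge1-\delta$. *)

From HB Require Import structures.
From mathcomp Require Import all_boot all_order all_algebra.
From mathcomp Require Import all_classical all_reals all_analysis.
From mathcomp Require Import measurable_realfun.
Import Order.TTheory GRing.Theory Num.Theory.
Import numFieldNormedType.Exports.

Set Implicit Arguments.
Unset Strict Implicit.
Unset Printing Implicit Defensive.

Local Open Scope classical_set_scope.
Local Open Scope ring_scope.

Definition Zopen (R : realType) (d : nat) : set_system ('rV[R]_d * R)%type :=
  open.

Definition Zsp (R : realType) (d : nat) := g_sigma_algebraType (@Zopen R d).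

Definition eucl_norm (R : realType) (d : nat) (x : 'rV[R]_d) : R :=
  Num.sqrt (\sum_(i < d) x ord0 i ^+ 2).

Definition sup_norm (R : realType) (d : nat) (Xs : set 'rV[R]_d)
  (h : 'rV[R]_d -> R) : \bar R :=
  ereal_sup [set (`|h x|)%:E | x in Xs].

Definition holder_seminorm (R : realType) (d : nat) (q : R)
  (Xs : set 'rV[R]_d) (h : 'rV[R]_d -> R) : \bar R :=
  ereal_sup [set r | exists x1 x2, [/\ Xs x1, Xs x2, x1 <> x2 &
     r = (`|h x1 - h x2| / (eucl_norm (x1 - x2)) `^ q)%:E]].

Definition holder_norm (R : realType) (d : nat) (q : R)
  (Xs : set 'rV[R]_d) (h : 'rV[R]_d -> R) : \bar R :=
  (sup_norm Xs h + holder_seminorm q Xs h)%E.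

Definition covers_with (R : realType) (d : nat) (q : R) (Xs : set 'rV[R]_d)
  (Hs : set ('rV[R]_d -> R)) (eps : R) (k : nat) : Prop :=
  exists c : 'I_k -> ('rV[R]_d -> R),
    (forall i, (holder_norm q Xs (c i) < +oo)%E) /\
    (forall h, Hs h -> exists i, (holder_norm q Xs (fun x => (h x - c i x)%R) <= eps%:E)%E).

Definition is_covering_number (R : realType) (d : nat) (q : R)
  (Xs : set 'rV[R]_d) (Hs : set ('rV[R]_d -> R)) (eps : R) (k : nat) : Prop :=
  covers_with q Xs Hs eps k /\ (forall j, covers_with q Xs Hs eps j -> (k <= j)%N).

Section Markov.
Context (R : realType) (d : nat).
Local Notation Z := (Zsp R d).

Definition tv_dist (P1 P2 : probability Z R) : \bar R :=
  (2%:E * ereal_sup [set `|P1 A - P2 A| | A in measurable])%E.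

Definition markov_chain (dO : measure_display) (Omega : measurableType dO)
  (P : probability Omega R) (Zc : nat -> Omega -> Z)
  (K : Z -> probability Z R) : Prop :=
  [/\ (forall i, measurable_fun setT (Zc i)),
      (forall A, measurable A -> measurable_fun [set: Z] ((fun z => K z A) : Z -> \bar R)) &
      (forall (A : nat -> set Z) (k : nat), (forall j, measurable (A j)) ->
         P (\bigcap_(j < k.+2) (Zc j @^-1` A j)) =
         (\int[P]_(w in \bigcap_(j < k.+1) (Zc j @^-1` A j)) K (Zc k w) (A k.+1))%E)].

Definition nstep_transitions (K : Z -> probability Z R)
  (Kn : nat -> Z -> probability Z R) : Prop :=
  (forall z A, measurable A -> Kn 1%N z A = K z A) /\
  (forall n z A, measurable A ->
     Kn n.+1 z A = (\int[Kn n z]_y K y A)%E).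

Definition stationary (K : Z -> probability Z R) (pi : probability Z R) : Prop :=
  forall A, measurable A -> pi A = (\int[pi]_z K z A)%E.

Definition V_geom_ergodic (K : Z -> probability Z R) (pi : probability Z R)
  (Zs : set Z) (V : Z -> R) (gamma rho B : R) : Prop :=
  [/\ measurable_fun Zs V, (forall z, Zs z -> 1 <= V z), rho < 1,
      (exists Kn, nstep_transitions K Kn /\
         forall z, Zs z -> forall n, (0 < n)%N ->
           (tv_dist (Kn n z) pi <= (gamma * rho ^+ n * V z)%:E)%E) &
      (\int[pi]_(z in Zs) (V z)%:E < B%:E)%E].

End Markov.

Definition exp_loss (R : realType) (d : nat) (pi : probability (Zsp R d) R)
  (Zs : set (Zsp R d)) (h : 'rV[R]_d -> R) : R :=
  fine (\int[pi]_(z in Zs) (`|h z.1 - z.2|)%:E)%E.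

Definition emp_loss (R : realType) (d : nat) (n : nat) (xs : nat -> 'rV[R]_d)
  (ys : nat -> R) (h : 'rV[R]_d -> R) : R :=
  n%:R^-1 * \sum_(i < n) `|h (xs i) - ys i|.

Definition eff_size (R : realType) (n : nat) (rho : R) : int :=
  Num.floor ((n%:R / (Num.ceil (Num.sqrt (8 * n%:R / ln rho^-1)))%:~R) : R).

Definition gamma_star (R : realType) (dH : measure_display)
  (HT : measurableType dH) (mu : probability HT R) (lossH : HT -> R) : R :=
  fine (ereal_inf [set t%:E | t in [set t | (0 < mu [set th | (lossH th <= t)%R])%E]]).

Definition Vprior (R : realType) (dH : measure_display)
  (HT : measurableType dH) (mu : probability HT R) (lossH : HT -> R) (eps : R) : R :=
  fine (mu [set th | lossH th <= gamma_star mu lossH + eps]).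

Definition bwa_weight (R : realType) (alpha : R) (n : nat) (lS : R) : R :=
  alpha `^ (n%:R * lS).

Definition bwa_post (R : realType) (dH : measure_display)
  (HT : measurableType dH) (mu : probability HT R) (alpha : R) (n : nat)
  (lS : HT -> R) (th : HT) : R :=
  bwa_weight alpha n (lS th) /
  fine (\int[mu]_t (bwa_weight alpha n (lS t))%:E)%E.

From HB Require Import structures.
From mathcomp Require Import all_boot all_order all_algebra.
From mathcomp Require Import all_classical all_reals all_analysis.
From mathcomp Require Import measurable_realfun.
From mathcomp Require Import ring lra.
Import Order.TTheory GRing.Theory Num.Theory.
Import numFieldNormedType.Exports.

Set Implicit Arguments.
Unset Strict Implicit.
Unset Printing Implicit Defensive.
Local Open Scope classical_set_scope.
Local Open Scope ring_scope.

(* On the event of Zou et al. at accuracy eps/6, the noisy empirical loss is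
   uniformly within r := eps/6 + Xi/2 of the expected loss l.  The posterior
   normalizer is then at least alpha^(n (gamma* + eps/2 + r)) times the prior
   mass V_{eps/2} of H_{gamma* + eps/2}, which is positive by the definition of
   gamma*, while an h with l(h) > gamma* + eps + Xi has weight at most
   alpha^(n (gamma* + eps/2 + r + eps/6)).  Dividing gives the bound. *)

(* For a nonnegative integrand the integral is a supremum of integrals of
   simple functions below it, so monotonicity needs no measurability. *)
Lemma ge0_le_integralT (d : measure_display) (T : measurableType d)
    (R : realType) (mu : {measure set T -> \bar R}) (f g : T -> \bar R) :
  (forall x, (0 <= g x)%E) -> (forall x, (g x <= f x)%E) ->
  (\int[mu]_x g x <= \int[mu]_x f x)%E.
Proof.
move=> g0 gf.
have f0 x : (0 <= f x)%E by exact: le_trans (g0 x) (gf x).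
rewrite !ge0_integralTE//; apply: ereal_sup_le => _ [h hg <-].
by exists h => // x; exact: le_trans (hg x) (gf x).
Qed.

Lemma emp_loss_noise_le (R : realType) (d n : nat) (xs : nat -> 'rV[R]_d)
    (ys xi : nat -> R) (Xi : R) (h : 'rV[R]_d -> R) :
  0 <= Xi -> (forall i, (i < n)%N -> - (Xi / 2) <= xi i <= Xi / 2) ->
  `|emp_loss n xs (fun i => ys i + xi i) h - emp_loss n xs ys h| <= Xi / 2.
Proof.
move=> Xi0 hxi; rewrite /emp_loss -mulrBr -sumrB.
case: n hxi => [|n] hxi; first by rewrite big_ord0 mulr0 normr0 divr_ge0.
have n1_gt0 : 0 < n.+1%:R :> R by rewrite ltr0n.
rewrite normrM gtr0_norm ?invr_gt0// ler_pdivrMl// mulr_natl.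
rewrite -[X in _ *+ X](card_ord n.+1) -sumr_const.
apply: le_trans (ler_norm_sum _ _ _) (ler_sum _ _) => i _.
apply: le_trans (ler_dist_dist _ _) _.
rewrite (_ : h (xs i) - (ys i + xi i) - (h (xs i) - ys i) = - xi i); last by ring.
by rewrite normrN ler_norml hxi.
Qed.

Section prior_mass.
Variables (R : realType) (dH : measure_display) (HT : measurableType dH).
Variables (mu : probability HT R) (loss : HT -> R).
Hypothesis measurable_sublevel : forall t, measurable [set h | loss h <= t].

Let sublevel t := [set h | loss h <= t].

(* The sublevel sets at 0, 1, 2, ... cover HT, which has mass 1. *)
Lemma exists_sublevel_gt0 : exists t : R, (0 < mu (sublevel t))%E.
Proof.
apply: contrapT => /forallNP null.
have null_nat k : mu (sublevel k%:R) = 0%E.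
  by apply/eqP; rewrite eq_le measure_ge0 andbT leNgt; apply/negP/null.
have cover : setT `<=` \bigcup_k sublevel k%:R.
  move=> h _; exists (Num.Def.archi_bound `|loss h|) => //.
  by apply/ltW/(le_lt_trans (ler_norm _)); exact: archi_boundP.
have := @measure_sigma_subadditive _ _ _ mu setT _
  (fun k => measurable_sublevel k%:R) measurableT cover.
rewrite eseries0; last by move=> k _ _; exact: null_nat.
move=> mu_le0; suff : (1 <= 0 :> \bar R)%E by rewrite lee_fin ler10.
by rewrite -(probability_setT mu); exact: mu_le0.
Qed.

Lemma gamma_star_sublevel_gt0 (e : R) :
  0 < e -> (0 < mu (sublevel (gamma_star mu loss + e)%R))%E.
Proof.
move=> e0; have [t0 t0_pos] := exists_sublevel_gt0.
set S := [set t%:E | t in [set t | (0 < mu (sublevel t))%E]].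
have S_lt : (ereal_inf S < (gamma_star mu loss + e)%:E)%E.
  rewrite /gamma_star -/S; case Sinf: (ereal_inf S) => [r| |] /=.
  - by rewrite lte_fin ltrDl.
  - have : (ereal_inf S <= t0%:E)%E by apply: ge_ereal_inf; exists t0%:E => //; exists t0.
    by rewrite Sinf.
  - by rewrite ltNyr.
have [_ [t t_pos <-]] := ereal_inf_lt S_lt; rewrite lte_fin => t_lt.
apply: (lt_le_trans t_pos); apply: le_measure; rewrite ?inE; try exact: measurable_sublevel.
by move=> h /= /le_trans; apply; exact: ltW.
Qed.

Lemma Vprior_gt0 (e : R) : 0 < e -> 0 < Vprior mu loss e.
Proof.
move=> /gamma_star_sublevel_gt0.
by rewrite /Vprior -lte_fin fineK// fin_num_measure.
Qed.

End prior_mass.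

Section bwa_posterior.
Variables (R : realType) (dH : measure_display) (HT : measurableType dH).
Variables (mu : probability HT R) (alpha : R) (n : nat) (lS : HT -> R).
Hypothesis alpha01 : 0 < alpha < 1.

Let alpha_gt0 : 0 < alpha.
Proof. by case/andP: alpha01. Qed.

Let alpha_le1 : 0 < alpha <= 1.
Proof. by rewrite alpha_gt0 ltW//; case/andP: alpha01. Qed.

Lemma bwa_normalizer_ge (H : set HT) (b : R) : measurable H ->
    (forall h, H h -> lS h <= b) ->
  ((alpha `^ (n%:R * b))%:E * mu H
    <= \int[mu]_h (bwa_weight alpha n (lS h))%:E)%E.
Proof.
move=> mH lS_le; set c := alpha `^ (n%:R * b).
have c_ge0 : 0 <= c by exact: powR_ge0.
rewrite -[X in (_ * mu X)%E]setIT -integral_indic//.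
rewrite -(@integralZl_indic _ _ _ mu setT measurableT (fun=> H) c) //; last first.
  by move=> /lt_le_trans/(_ c_ge0); rewrite ltxx.
apply: ge0_le_integralT => h; rewrite lee_fin indicE; first by rewrite mulr_ge0.
have [/set_mem Hh|_] := boolP (h \in H); last by rewrite mulr0 powR_ge0.
rewrite mulr1; apply: ger_powR => //.
by apply: ler_wpM2l; [exact: ler0n | exact: lS_le].
Qed.

Lemma bwa_post_le (H : set HT) (b : R) h : measurable H -> (0 < mu H)%E ->
    (forall h', H h' -> lS h' <= b) ->
  bwa_post mu alpha n lS h <= alpha `^ (n%:R * (lS h - b)) / fine (mu H).
Proof.
move=> mH muH_gt0 lS_le; set m := fine (mu H); set c := alpha `^ (n%:R * b).
have muHE : mu H = m%:E by rewrite fineK// fin_num_measure.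
have m_gt0 : 0 < m by rewrite -lte_fin -muHE.
have c_gt0 : 0 < c by exact: powR_gt0.
have rhs_ge0 : 0 <= alpha `^ (n%:R * (lS h - b)) / m by rewrite divr_ge0 ?powR_ge0 ?ltW.
have := bwa_normalizer_ge mH lS_le; rewrite /bwa_post -/c muHE -EFinM.
case: (\int[mu]_t _)%E => [r| |] //=; last by rewrite invr0 mulr0.
rewrite lee_fin => cm_le_r.
apply: (@le_trans _ _ (alpha `^ (n%:R * lS h) / (c * m))).
  apply: ler_wpM2l; first exact: powR_ge0.
  by rewrite lef_pV2 ?posrE ?mulr_gt0// (lt_le_trans _ cm_le_r) ?mulr_gt0.
rewrite invfM mulrA mulrBr powRB//.
by rewrite (gt_eqF alpha_gt0) implybT.
Qed.

Lemma bwa_post_le_Vprior (l : HT -> R) (s r c : R) h :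
    (forall t, measurable [set h' | l h' <= t]) ->
    0 < s -> 0 <= c -> (forall h', `|lS h' - l h'| <= r) ->
    gamma_star mu l + s + 2 * r + c <= l h ->
  bwa_post mu alpha n lS h <= alpha `^ (n%:R * c) / Vprior mu l s.
Proof.
move=> mlevel s0 c0 close lh_ge.
set H := [set h' | l h' <= gamma_star mu l + s].
have lS_le h' : H h' -> lS h' <= gamma_star mu l + s + r.
  by move: (close h'); rewrite /H /= ler_norml => /andP[_]; lra.
apply: (le_trans (bwa_post_le h (mlevel _) _ lS_le)).
  exact: gamma_star_sublevel_gt0.
apply: ler_wpM2r; first by rewrite invr_ge0 ltW// Vprior_gt0.
apply: ger_powR => //; apply: ler_wpM2l; first exact: ler0n.
by move: (close h); rewrite ler_norml => /andP[]; lra.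
Qed.

End bwa_posterior.

Theorem lemma4
  (R : realType) (d : nat) (Xs : set 'rV[R]_d) (Ys : set R) (q : R)
  (dH : measure_display) (HT : measurableType dH)
  (hf : HT -> 'rV[R]_d -> R) (mu : probability HT R)
  (dO : measure_display) (Omega : measurableType dO) (P : probability Omega R)
  (Zc : nat -> Omega -> Zsp R d) (K : Zsp R d -> probability (Zsp R d) R)
  (pi : probability (Zsp R d) R) (V : Zsp R d -> R) (gamma rho B : R)
  (xi : nat -> Omega -> R) (Xi : R) (n : nat) (alpha M L eps delta : R)
  (* X, Y compact; H a subset of a ball of C^q(X), functions X -> Y *)
  (hX : compact Xs) (hY : compact Ys) (hq : 0 < q)
  (hHY : forall th x, Xs x -> Ys (hf th x))
  (hball : exists (c : 'rV[R]_d -> R) (r : R), (holder_norm q Xs c < +oo)%E /\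
      forall th, (holder_norm q Xs (fun x => (hf th x - c x)%R) <= r%:E)%E)
  (hinj : forall th1 th2, (forall x, Xs x -> hf th1 x = hf th2 x) -> th1 = th2)
  (* the constants M and L, positive and finite *)
  (hM : ereal_sup [set r | exists th z, (Xs `*` Ys) z /\
           r = (`|hf th z.1 - z.2|)%:E] = M%:E)
  (hM0 : 0 < M)
  (hL : ereal_sup [set r | exists th1 th2 z,
           [/\ exists x, Xs x /\ hf th1 x <> hf th2 x, (Xs `*` Ys) z &
           r = (`| `|hf th1 z.1 - z.2| - `|hf th2 z.1 - z.2| | /
                 fine (sup_norm Xs (fun x => hf th1 x - hf th2 x)))%:E]] = L%:E)
  (hL0 : 0 < L)
  (* the V-geometrically ergodic Markov chain on Z = X x Y *)
  (hmc : markov_chain P Zc K)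
  (hZ : forall i w, (Xs `*` Ys) (Zc i w))
  (hstat : stationary K pi) (hpiZ : pi (Xs `*` Ys) = 1%E)
  (herg : V_geom_ergodic K pi (Xs `*` Ys) V gamma rho B)
  (hrho : 0 < rho)
  (* bounded noise *)
  (hxim : forall i, measurable_fun [set: Omega] (xi i))
  (hxi : forall i w, (i < n)%N -> - (Xi / 2) <= xi i w <= Xi / 2)
  (hXi : 0 <= Xi)
  (* BWA parameter, prior *)
  (halpha : 0 < alpha < 1)
  (hHt : forall t : R,
      measurable [set th | exp_loss pi (Xs `*` Ys) (hf th) <= t])
  (* Known fact (Zou et al. 2012): uniform convergence on the noiseless data *)
  (hZou : forall e dl : R, 0 < e <= 3 * M -> 0 < dl < 1 ->
      (exists k : nat, is_covering_number q Xs (range hf) (e / (4 * L)) k /\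
         8 * M ^+ 2 / e ^+ 2 * (ln (2 / dl) + ln (1 + gamma * B * expR (-2))
                                 + ln k%:R) <= (eff_size n rho)%:~R) ->
      exists E : set Omega, [/\ measurable E,
        E `<=` [set w | forall th,
           `|emp_loss n (fun i => (Zc i w).1) (fun i => (Zc i w).2) (hf th)
             - exp_loss pi (Xs `*` Ys) (hf th)| < e] &
        ((1 - dl)%:E <= P E)%E])
  (heps : 0 < eps <= 3 * M) (hdelta : 0 < delta < 1)
  (hne : exists k : nat, is_covering_number q Xs (range hf) (eps / (24 * L)) k /\
         288 * M ^+ 2 / eps ^+ 2 * (ln (2 / delta) + ln (1 + gamma * B * expR (-2))
                                 + ln k%:R) <= (eff_size n rho)%:~R) :
  exists E : set Omega, [/\ measurable E,
    E `<=` [set w |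
      (ereal_sup [set (bwa_post mu alpha n
           (fun t => emp_loss n (fun i => (Zc i w).1)
                               (fun i => (Zc i w).2 + xi i w) (hf t)) th)%:E
         | th in [set th | ~ (exp_loss pi (Xs `*` Ys) (hf th) <=
              gamma_star mu (fun t => exp_loss pi (Xs `*` Ys) (hf t)) + eps + Xi)%R]]
       <= (alpha `^ (n%:R * eps / 6) /
           Vprior mu (fun t => exp_loss pi (Xs `*` Ys) (hf t)) (eps / 2))%:E)%E] &
    ((1 - delta)%:E <= P E)%E].
Proof.
case/andP: heps => eps_gt0 eps_le.
have eps6 : 0 < eps / 6 <= 3 * M by apply/andP; split; lra.
have cover_eq : eps / 6 / (4 * L) = eps / (24 * L) by field; rewrite gt_eqF.
have rate_eq : 8 * M ^+ 2 / (eps / 6) ^+ 2 = 288 * M ^+ 2 / eps ^+ 2.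
  by field; rewrite gt_eqF.
have := hZou _ _ eps6 hdelta; rewrite cover_eq rate_eq => /(_ hne)[E [mE E_close PE]].
exists E; split => // w /E_close close.
apply: ge_ereal_sup => _ [th /= th_bad <-]; rewrite lee_fin -mulrA.
apply: (bwa_post_le_Vprior _ halpha (r := eps / 6 + Xi / 2)) => //.
- lra.
- lra.
- move=> h; pose lS := emp_loss n (fun i => (Zc i w).1) (fun i => (Zc i w).2) (hf h).
  apply: (le_trans (ler_distD lS _ _)); rewrite addrC lerD ?(ltW (close h))//.
  exact: emp_loss_noise_le (fun i => hxi i w).
- move/negP: th_bad; rewrite -ltNge => /ltW; lra.
Qed.
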